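(* Let $\mathfrak L$ be a color gLt-algebra admitting a multiplicative basis $\mathfrak B=\{e_i\}_{i\in I}$. Then $\mathfrak L=\bigoplus_{[i]\in I/\sim}\mathfrak J_{[i]}$, where each $\mathfrak J_{[i]}$ is a color gLt-ideal of $\mathfrak L$ admitting a multiplicative basis inherited by the one of $\mathfrak L$ (namely $\{e_j\}_{j\in[i]}$).
   Context: Let $\mathbb F$ be a field, $\mathbb G$ an abelian group, $n\ge 2$, and $\epsilon:\mathbb G\times\mathbb G\to\mathbb F\setminus\{0\}$ a bicharacter ($\epsilon(k,g+h)=\epsilon(k,g)\epsilon(k,h)$, $\epsilon(g+h,k)=\epsilon(g,k)\epsilon(h,k)$, $\epsilon(g,h)\epsilon(h,g)=1$). A graded $n$-ary algebra is a $\mathbb G$-graded vector space $\mathfrak L=\bigoplus_{g\in\mathbb G}\mathfrak L_g$ with an $n$-linear map $\langle\cdot,\dots,\cdot\rangle:\mathfrak L^n\to\mathfrak L$ such that $\langle\mathfrak L_{g_1},\dots,\mathfrak L_{g_n}\rangle\subset\mathfrak L_{g_1+\dots+g_n}$. For $\sigma\in\mathbb S_n$ write $\langle x_1,\dots,x_n\rangle_\sigma:=\langle x_{\sigma(1)},\dots,x_{\sigma(n)}\rangle$; for subsets $A_1,\dots,A_n$, $\langle A_1,\dots,A_n\rangle_\sigma$ denotes the linear span of all $\langle x_1,\dots,x_n\rangle_\sigma$ with $x_r\in A_r$. A color gLt-algebra is a graded $n$-ary algebra satisfying, for each $k=1,\dots,n$ and fixed scalars $\alpha^{\sigma_1,\sigma_2}_{i,j,k}\in\mathbb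 F$, the color version (each term on the right multiplied by the product of values of $\epsilon$ on the degrees of the homogeneous arguments transposed in passing from the left-hand order to the order of that term) of the identity $\langle y_1,\dots,y_{k-1},\langle x_1,\dots,x_n\rangle,y_k,\dots,y_{n-1}\rangle=\sum_{1\le i,j\le n,\,\sigma_1\in\mathbb S_n,\,\sigma_2\in\mathbb S_{n-1}}\alpha^{\sigma_1,\sigma_2}_{i,j,k}\langle x_{\sigma_1(1)},\dots,x_{\sigma_1(i-1)},\langle y_{\sigma_2(1)},\dots,y_{\sigma_2(j-1)},x_{\sigma_1(i)},y_{\sigma_2(j)},\dots,y_{\sigma_2(n-1)}\rangle,x_{\sigma_1(i+1)},\dots,x_{\sigma_1(n)}\rangle$. A $\mathbb G$-graded subspace $\mathcal I\subset\mathfrak L$ is a color gLt-ideal if $\langle\mathcal I,\mathfrak L,\dots,\mathfrak L\rangle_\sigma\subset\mathcal I$ for every $\sigma\in\mathbb S_n$. A basis $\mathfrak B=\{e_i\}_{i\in I}$ of homogeneous elements of $\mathfrak L$ is multiplicative if for all $i_1,\dots,i_n\in I$, $\langle e_{i_1},\dots,e_{i_n}\rangle\in\mathbb Fe_j$ for some $j\in I$. Such a basis is regarded as a quasi-multiplicative basis with $\mathbb V=0$ and $\mathbb W=\mathfrak L$ (quasi-multiplicative basis: $\mathfrak L=\mathbb V\oplus\mathbb W$, $\mathbb V,\mathbb W\ne0$ graded subspaces, $\{e_i\}_{i\in I}$ a homogeneous basis of $\mathbb W$ with: products of basis elements in some $\mathbb Fe_j$ or in $\mathbb V$; for $0<k<n$,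 $\langle e_{i_1},\dots,e_{i_k},\mathbb V,\dots,\mathbb V\rangle_\sigma\subset\mathbb Fe_{j_\sigma}$; $\langle\mathbb V,\dots,\mathbb V\rangle$ in some $\mathbb Fe_j$ or in $\mathbb V$). Index maps: let $v$ be a symbol not in $I$, $\mathfrak I:=I\,\dot\cup\,\{v\}$; for each $j\in\mathfrak I$ take a new symbol $\overline j$, $\overline I:=\{\overline i:i\in I\}$, $\overline{\mathfrak I}:=\overline I\,\dot\cup\,\{\overline v\}$; set $\overline{(\overline j)}:=j$, $\overline J:=\{\overline j:j\in J\}$ for a set $J$ of symbols ($\overline\emptyset=\emptyset$). Put $u_j:=e_j$ for $j\in I$ and $u_v:=\mathbb V$. For $\sigma\in\mathbb S_n$ and $(j_1,\dots,j_n)\in\mathfrak I^n$ let $a_\sigma(j_1,\dots,j_n)=\{r\}$ if $r\in I$ and $0\ne\langle u_{j_1},\dots,u_{j_n}\rangle_\sigma\subset\mathbb Fe_r$, $=\{v\}$ if $0\ne\langle u_{j_1},\dots,u_{j_n}\rangle_\sigma\subset\mathbb V$, and $=\emptyset$ otherwise. For $j,j_2,\dots,j_n\in\mathfrak I$ let $b_\sigma(j,\overline j_2,\dots,\overline j_n):=\{x\in\mathfrak I: a_\sigma(x,j_2,\dots,j_n)=\{j\}\}$. Define $\mu$ on $(\mathfrak I\,\dot\cup\,\overline{\mathfrak I})\times(\mathfrak I^{n-1}\,\dot\cup\,\overline{\mathfrak I}^{n-1})$ with values subsets of $\mathfrak I$ by: $\mu(j,j_1,\dots,j_{n-1})=\bigcup_{\sigma\in\mathbb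 S_n}a_\sigma(j,j_1,\dots,j_{n-1})$ for $j,j_1,\dots,j_{n-1}\in\mathfrak I$; $\mu(j,\overline j_1,\dots,\overline j_{n-1})=\bigcup_{\sigma\in\mathbb S_n}b_\sigma(j,\overline j_1,\dots,\overline j_{n-1})$ for $j,j_1,\dots,j_{n-1}\in\mathfrak I$; $\mu(\overline j,j_1,\dots,j_{n-1})=\bigcup_{1\le k\le n-1,\ \sigma\in\mathbb S_n}b_\sigma(j_k,\overline j,\overline j_1,\dots,\overline j_{k-1},\overline j_{k+1},\dots,\overline j_{n-1})$ for $j,j_1,\dots,j_{n-1}\in\mathfrak I$; and $\mu(\overline j,\overline j_1,\dots,\overline j_{n-1})=\emptyset$. Define $\phi$ on pairs $(J,X)$ with $J\subset I\,\dot\cup\,\overline I$ and $X\in\mathfrak I^{n-1}\,\dot\cup\,\overline{\mathfrak I}^{n-1}$ by $\phi(\emptyset,X)=\emptyset$ and, for $J\ne\emptyset$, $\phi(J,X):=K\cup\overline K$ where $K:=\big(\bigcup_{j\in J}\mu(j,X)\big)\setminus\{v\}$. Connections: for distinct $i,j\in I$, $i$ is connected to $j$ if there exist $t\ge1$, $X_1,\dots,X_t\in\mathfrak I^{n-1}\,\dot\cup\,\overline{\mathfrak I}^{n-1}$ and $\widetilde i\in\{i,\overline i\}$ such that $\phi(\{\widetilde i\},X_1)\ne\emptyset$, …, $\phi(\cdots\phi(\{\widetilde i\},X_1)\cdots,X_{t-1})\ne\emptyset$, and $j\in\phi(\cdots\phi(\phi(\{\widetilde i\},X_1),X_2)\cdots,X_t)$;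 every $i$ is connected to itself. Being connected is an equivalence relation $\sim$ on $I$; $[i]$ denotes the class of $i$. Define $\mathbb V_{[i]}:=\big(\sum_{i_1,\dots,i_n\in[i]}\mathbb F\langle e_{i_1},\dots,e_{i_n}\rangle\big)\cap\mathbb V$, $\mathbb W_{[i]}:=\bigoplus_{j\in[i]}\mathbb Fe_j$, and $\mathfrak J_{[i]}:=\mathbb V_{[i]}\oplus\mathbb W_{[i]}$ (here $\mathbb V_{[i]}=0$). *)

(* Arity n of the algebra is encoded as n = m.+2 (i.e. n >= 2);
   S_{n-1} is 'S_m.+1, tails of length n-1 are indexed by 'I_m.+1. *)
From HB Require Import structures.
From mathcomp Require Import all_boot all_order all_algebra all_fingroup.
Set Implicit Arguments. Unset Strict Implicit. Unset Printing Implicit Defensive.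
Import GRing.Theory.
Local Open Scope ring_scope.

Definition subspace {F : fieldType} {L : lmodType F} (P : L -> Prop) :=
  P 0 /\ forall (a : F) x y, P x -> P y -> P (a *: x + y).

Definition span {F : fieldType} {L : lmodType F} (S : L -> Prop) : L -> Prop :=
  fun x => exists (k : nat) (v : 'I_k -> L) (a : 'I_k -> F),
    (forall t, S (v t)) /\ x = \sum_(t < k) a t *: v t.

Definition direct_sum {F : fieldType} {L : lmodType F} {J : Type} (W : J -> L -> Prop) :=
  (forall j, subspace (W j)) /\
  (forall x : L, exists (k : nat) (c : 'I_k -> J) (y : 'I_k -> L),
      (forall t, W (c t) (y t)) /\ x = \sum_(t < k) y t) /\
  (forall (k : nat) (c : 'I_k -> J) (y : 'I_k -> L), injective c ->
      (forall t, W (c t) (y t)) -> \sum_(t < k) y t = 0 -> forall t, y t = 0).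

Definition bicharacter {F : fieldType} {G : zmodType} (eps : G -> G -> F) :=
  (forall g h, eps g h <> 0) /\
  (forall k g h, eps k (g + h) = eps k g * eps k h) /\
  (forall k g h, eps (g + h) k = eps g k * eps h k) /\
  (forall g h, eps g h * eps h g = 1).

(* insert a at position k (0-based) into a sequence z of length p *)
Definition ins {T : Type} {p : nat} (k : 'I_p.+1) (a : T) (z : 'I_p -> T) : 'I_p.+1 -> T :=
  fun r => match unlift k r with None => a | Some r' => z r' end.

Definition multilinear {F : fieldType} {L : lmodType F} {m : nat}
  (prod : ('I_m.+2 -> L) -> L) :=
  forall (x : 'I_m.+2 -> L) (k : 'I_m.+2) (a : F) (y z : L),
    prod (fun r => if r == k then a *: y + z else x r)
    = a *: prod (fun r => if r == k then y else x r)
      + prod (fun r => if r == k then z else x r).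

(* Lg g is the homogeneous component L_g *)
Definition graded_algebra {F : fieldType} {G : zmodType} {L : lmodType F} {m : nat}
  (Lg : G -> L -> Prop) (prod : ('I_m.+2 -> L) -> L) :=
  multilinear prod /\ direct_sum Lg /\
  (forall (g : 'I_m.+2 -> G) (x : 'I_m.+2 -> L),
      (forall r, Lg (g r) (x r)) -> Lg (\sum_(r < m.+2) g r) (prod x)).

(* Labels of the 2n-1 arguments of the identity: inl r = x_{r+1}, inr s = y_{s+1}. *)
Definition lab (m : nat) := ('I_m.+2 + 'I_m.+1)%type.

(* 0-based position of an argument in the left-hand side
   <y_1,..,y_{k-1},<x_1,..,x_n>,y_k,..,y_{n-1}>, k 0-based *)
Definition posL {m : nat} (k : 'I_m.+2) (l : lab m) : nat :=
  match l with
  | inl r => (k + r)%N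
  | inr s => if (s < k)%N then nat_of_ord s else (s + m.+2)%N
  end.

(* 0-based position of an argument in the right-hand side term
   <x_{s1(1)},..,x_{s1(i-1)},<y_{s2(1)},..,y_{s2(j-1)},x_{s1(i)},y_{s2(j)},..>,x_{s1(i+1)},..>
   (i, j 0-based) *)
Definition posR {m : nat} (i j : 'I_m.+2) (s1 : 'S_m.+2) (s2 : 'S_m.+1) (l : lab m) : nat :=
  match l with
  | inl q => let r := (s1^-1)%g q in
             if (r < i)%N then nat_of_ord r
             else if r == i then (i + j)%N else (r + m.+1)%N
  | inr s => let p := (s2^-1)%g s in
             (i + (if (p < j)%N then nat_of_ord p else p.+1))%N
  end.

(* product of eps(deg a, deg b) over all pairs of arguments a, b such that a
   precedes b on the left-hand side and b precedes a in the right-hand term *)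
Definition color_sign {F : fieldType} {G : zmodType} {m : nat} (eps : G -> G -> F)
  (dx : 'I_m.+2 -> G) (dy : 'I_m.+1 -> G)
  (k i j : 'I_m.+2) (s1 : 'S_m.+2) (s2 : 'S_m.+1) : F :=
  let deg (l : lab m) := match l with inl r => dx r | inr s => dy s end in
  \prod_(a : lab m) \prod_(b : lab m |
      (posL k a < posL k b)%N && (posR i j s1 s2 b < posR i j s1 s2 a)%N)
     eps (deg a) (deg b).

Definition color_gLt_algebra {F : fieldType} {G : zmodType} {L : lmodType F} {m : nat}
  (eps : G -> G -> F) (Lg : G -> L -> Prop) (prod : ('I_m.+2 -> L) -> L) :=
  graded_algebra Lg prod /\
  exists alpha : 'I_m.+2 -> 'I_m.+2 -> 'I_m.+2 -> 'S_m.+2 -> 'S_m.+1 -> F,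
  forall (k : 'I_m.+2) (dx : 'I_m.+2 -> G) (dy : 'I_m.+1 -> G)
         (x : 'I_m.+2 -> L) (y : 'I_m.+1 -> L),
    (forall r, Lg (dx r) (x r)) -> (forall s, Lg (dy s) (y s)) ->
    prod (ins k (prod x) y) =
    \sum_(i < m.+2) \sum_(j < m.+2) \sum_(s1 : 'S_m.+2) \sum_(s2 : 'S_m.+1)
      (alpha i j k s1 s2 * color_sign eps dx dy k i j s1 s2) *:
      prod (fun r => if r == i
                     then prod (ins j (x (s1 i)) (fun s => y (s2 s)))
                     else x (s1 r)).

(* <A_1,...,A_n>_sigma : span of all <x_{sigma(1)},...,x_{sigma(n)}>, x_r in A_r *)
Definition prodset {F : fieldType} {L : lmodType F} {m : nat}
  (prod : ('I_m.+2 -> L) -> L) (sigma : 'S_m.+2) (A : 'I_m.+2 -> L -> Prop) : L -> Prop :=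
  span (fun z => exists x : 'I_m.+2 -> L, (forall r, A r (x r)) /\ z = prod (fun r => x (sigma r))).

Definition graded_subspace {F : fieldType} {G : zmodType} {L : lmodType F}
  (Lg : G -> L -> Prop) (J : L -> Prop) :=
  subspace J /\
  forall x, J x -> exists (k : nat) (c : 'I_k -> G) (y : 'I_k -> L),
    (forall t, Lg (c t) (y t) /\ J (y t)) /\ x = \sum_(t < k) y t.

Definition color_ideal {F : fieldType} {G : zmodType} {L : lmodType F} {m : nat}
  (Lg : G -> L -> Prop) (prod : ('I_m.+2 -> L) -> L) (J : L -> Prop) :=
  graded_subspace Lg J /\
  forall sigma : 'S_m.+2,
    forall z, prodset prod sigma (fun r => if r == ord0 then J else (fun _ => True)) z -> J z.

Definition mult_basis {F : fieldType} {G : zmodType} {L : lmodType F} {m : nat} {I : Type}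
  (Lg : G -> L -> Prop) (prod : ('I_m.+2 -> L) -> L)
  (P : L -> Prop) (Iset : I -> Prop) (e : I -> L) :=
  (forall i, Iset i -> exists g, Lg g (e i)) /\
  (forall (k : nat) (c : 'I_k -> I) (a : 'I_k -> F), injective c ->
     (forall t, Iset (c t)) -> \sum_(t < k) a t *: e (c t) = 0 -> forall t, a t = 0) /\
  (forall x, P x <-> exists (k : nat) (c : 'I_k -> I) (a : 'I_k -> F),
       (forall t, Iset (c t)) /\ x = \sum_(t < k) a t *: e (c t)) /\
  (forall idx : 'I_m.+2 -> I, (forall r, Iset (idx r)) ->
     exists j, Iset j /\ exists a : F, prod (fun r => e (idx r)) = a *: e j).

(* The symbol set frak I = I + {v} is option I (None = v);
   a barred symbol is encoded by the flag true.                        *)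

Section Connections.
Context {F : fieldType} {L : lmodType F} {m : nat} {I : Type}.
Variables (V : L -> Prop) (prod : ('I_m.+2 -> L) -> L) (e : I -> L).

Definition u_ (o : option I) : L -> Prop :=
  match o with Some i => fun x => x = e i | None => V end.

Definition a_sig (sigma : 'S_m.+2) (js : 'I_m.+2 -> option I) : option I -> Prop :=
  fun o =>
    let P := prodset prod sigma (fun r => u_ (js r)) in
    (exists z, P z /\ z <> 0) /\
    match o with
    | Some r => forall z, P z -> exists c : F, z = c *: e r
    | None => forall z, P z -> V z
    end.

(* b_sigma(j, bar j_2, ..., bar j_n) *)
Definition b_sig (sigma : 'S_m.+2) (j : option I) (tl : 'I_m.+1 -> option I) :
  option I -> Prop :=
  fun x => forall o, a_sig sigma (ins ord0 x tl) o <-> o = j.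

Definition Xtype := (bool * ('I_m.+1 -> option I))%type.

Definition mu (j : bool * option I) (X : Xtype) : option I -> Prop :=
  match j.1, X.1 with
  | false, false => fun o => exists sigma, a_sig sigma (ins ord0 j.2 X.2) o
  | false, true => fun o => exists sigma, b_sig sigma j.2 X.2 o
  | true, false => fun o => exists (k : 'I_m.+1) sigma,
                     b_sig sigma (X.2 k) (ins ord0 j.2 (fun r => X.2 (lift k r))) o
  | true, true => fun _ => False
  end.

Definition phi (J : bool * I -> Prop) (X : Xtype) : bool * I -> Prop :=
  fun z => exists j, J j /\ mu (j.1, Some j.2) X (Some z.2).

Definition connected (i j : I) : Prop :=
  i = j \/
  (i <> j /\ exists (Xs : seq Xtype) (b : bool),
     (0 < size Xs)%N /\
     (forall k, (0 < k < size Xs)%N ->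
        exists z, foldl phi (fun z => z = (b, i)) (take k Xs) z) /\
     foldl phi (fun z => z = (b, i)) Xs (false, j)).

Definition cls (i : I) : I -> Prop := fun j => connected i j.

Definition conn_classes := {C : I -> Prop | exists i, C = cls i}.

Definition V_cl (C : I -> Prop) : L -> Prop := fun x =>
  span (fun z => exists idx : 'I_m.+2 -> I, (forall r, C (idx r)) /\
                                          z = prod (fun r => e (idx r))) x /\ V x.

Definition W_cl (C : I -> Prop) : L -> Prop := span (fun z => exists j, C j /\ z = e j).

Definition J_cl (C : I -> Prop) : L -> Prop :=
  fun x => exists a b, V_cl C a /\ W_cl C b /\ x = a + b.

End Connections.

Definition zero_sp {F : fieldType} (L : lmodType F) : L -> Prop := fun x => x = 0.
Arguments zero_sp {F} L _.

From Pilot Require Import Defs.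
From HB Require Import structures.
From mathcomp Require Import all_boot all_order all_algebra all_fingroup.
From mathcomp Require Import boolp.
From Stdlib Require Import Relations.
Set Implicit Arguments. Unset Strict Implicit. Unset Printing Implicit Defensive.
Import GRing.Theory.
Local Open Scope ring_scope.

(* With V = 0 the ideal J_[i] is the span of {e_j : j in [i]}.  Connectedness is the
   reflexive-transitive closure of a one-step relation read off mu; linear independence
   makes a_sigma single-valued, so b_sigma inverts it and the step relation is symmetric,
   and the classes partition I.  Spans of disjoint sets of basis vectors form a direct
   sum.  By multilinearity the ideal property reduces to products of basis vectors, and a
   nonzero such product is a multiple of some e_j connected to each of its arguments. *)

Section Span.
Variables (F : fieldType) (L : lmodType F).
Implicit Types (S P : L -> Prop) (x : L).

Lemma span_mem S x : S x -> Defs.span S x.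
Proof.
by move=> Sx; exists 1%N, (fun _ => x), (fun _ => 1); split=> //; rewrite big_ord1 scale1r.
Qed.

Lemma subspace_span S : subspace (Defs.span S).
Proof.
split; first by exists 0%N, (fun _ => 0), (fun _ => 0); split=> [[]|]; rewrite ?big_ord0.
move=> b _ _ [k1 [v1 [a1 [S1 ->]]]] [k2 [v2 [a2 [S2 ->]]]].
exists (k1 + k2)%N, (fun t => match split t with inl u => v1 u | inr u => v2 u end),
  (fun t => match split t with inl u => b * a1 u | inr u => a2 u end).
split=> [t|]; first by case: (split t).
rewrite big_split_ord /= scaler_sumr; congr (_ + _); apply: eq_bigr => t _.
  by rewrite (unsplitK (inl _)) scalerA.
by rewrite (unsplitK (inr _)).
Qed.

Lemma subspaceZ P a x : subspace P -> P x -> P (a *: x).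
Proof. by move=> [P0 PZD] Px; rewrite -[_ *: x]addr0; apply: PZD. Qed.

Lemma subspaceD P x y : subspace P -> P x -> P y -> P (x + y).
Proof. by move=> [_ PZD] Px Py; rewrite -[x]scale1r; apply: PZD. Qed.

Lemma subspaceN P x : subspace P -> P x -> P (- x).
Proof. by move=> sP Px; rewrite -scaleN1r; apply: subspaceZ. Qed.

Lemma subspace_sum P (T : finType) (y : T -> L) (Q : pred T) :
  subspace P -> (forall t, Q t -> P (y t)) -> P (\sum_(t | Q t) y t).
Proof.
move=> sP Py; apply: big_ind => //; first exact: sP.1.
by move=> u v; apply: subspaceD.
Qed.

Lemma span_sub_subspace S P :
  subspace P -> (forall x, S x -> P x) -> forall x, Defs.span S x -> P x.
Proof.
move=> sP SP _ [k [v [a [Sv ->]]]].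
by apply: subspace_sum => // t _; apply: subspaceZ => //; apply: SP.
Qed.

Lemma eq_span S S' : (forall x, S x <-> S' x) -> Defs.span S = Defs.span S'.
Proof.
move=> SS'; apply/funext => x; apply/propext.
by split=> -[k [v [a [Sv ->]]]]; exists k, v, a; split=> // t; apply/SS'.
Qed.

End Span.

Section BasisSpan.
Variables (F : fieldType) (L : lmodType F) (I : Type) (e : I -> L).
Implicit Types (Q : I -> Prop) (x : L).

Lemma W_cl_subspace Q : subspace (W_cl e Q).
Proof. exact: subspace_span. Qed.

Lemma W_cl_scale Q j a : Q j -> W_cl e Q (a *: e j).
Proof. by move=> Qj; apply: subspaceZ; [exact: W_cl_subspace | apply: span_mem; exists j]. Qed.

Lemma W_clP Q x : W_cl e Q x <-> exists k (c : 'I_k -> I) (a : 'I_k -> F),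
  (forall t, Q (c t)) /\ x = \sum_(t < k) a t *: e (c t).
Proof.
split=> [[k [v [a [Sv ->]]]] | [k [c [a [Qc ->]]]]]; last first.
  by apply: subspace_sum => [|t _]; [exact: W_cl_subspace | exact: W_cl_scale].
have [c Hc] := choice Sv.
exists k, c, a; split=> [t|]; first by case: (Hc t).
by apply: eq_bigr => t _; case: (Hc t) => _ ->.
Qed.

Lemma W_cl_sub Q Q' : (forall j, Q j -> Q' j) -> forall x, W_cl e Q x -> W_cl e Q' x.
Proof.
move=> QQ'; apply: span_sub_subspace; first exact: W_cl_subspace.
by move=> _ [j [Qj ->]]; rewrite -[e j]scale1r; apply: W_cl_scale; apply: QQ'.
Qed.

Lemma graded_subspace_W_cl (G : zmodType) (Lg : G -> L -> Prop) Q :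
  (forall g, subspace (Lg g)) -> (forall j, exists g, Lg g (e j)) ->
  graded_subspace Lg (W_cl e Q).
Proof.
move=> Lg_sub e_hom; split=> [|x /W_clP [k [c [a [Qc ->]]]]]; first exact: W_cl_subspace.
have [g Hg] := choice (fun t => e_hom (c t)).
exists k, (fun t => g t), (fun t => a t *: e (c t)); split=> // t.
by split; [apply: subspaceZ | apply: W_cl_scale].
Qed.

Lemma sum_scale_group (T : finType) (c : T -> I) (a : T -> F) :
  \sum_t a t *: e (c t) =
  \sum_(j <- undup [seq c t : {classic I} | t <- enum T])
     (\sum_(t | (c t : {classic I}) == j) a t) *: e j.
Proof.
set s := undup _.
have -> : \sum_(j <- s) (\sum_(t | (c t : {classic I}) == j) a t) *: e j =
          \sum_(j <- s) \sum_t (if (c t : {classic I}) == j then a t *: e (c t) else 0).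
  apply: eq_bigr => j _; rewrite scaler_suml big_mkcond; apply: eq_bigr => t _.
  by case: eqP => // ->.
rewrite exchange_big /=; apply: eq_bigr => t _.
have cts : (c t : {classic I}) \in s by rewrite mem_undup; apply: map_f; rewrite mem_enum.
rewrite (bigD1_seq _ cts (undup_uniq _)) /= eqxx big1 ?addr0 // => j.
by rewrite eq_sym => /negbTE ->.
Qed.

Definition free_family := forall k (c : 'I_k -> I) (a : 'I_k -> F), injective c ->
  \sum_(t < k) a t *: e (c t) = 0 -> forall t, a t = 0.

Hypothesis e_free : free_family.

Lemma e_neq0 j : e j != 0.
Proof.
apply/eqP => ej0.
have c_inj : injective (fun _ : 'I_1 => j) by move=> u v _; rewrite (ord1 u) (ord1 v).
have := @e_free 1%N _ (fun _ => 1) c_inj.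
by rewrite big_ord1 ej0 scaler0 => /(_ erefl ord0)/eqP; rewrite oner_eq0.
Qed.

(* free_family only speaks of distinct indices: group the equal ones first. *)
Lemma sum_scale_eq0 (T : finType) (c : T -> I) (a : T -> F) :
  \sum_t a t *: e (c t) = 0 ->
  forall j : {classic I}, \sum_(t | (c t : {classic I}) == j) a t = 0.
Proof.
rewrite sum_scale_group => /eqP; set s := undup _ => /eqP sum0 j.
have [js|jNs] := boolP (j \in s); last first.
  rewrite big1 // => t /eqP ctj; case/negP: jNs; rewrite -ctj mem_undup.
  by apply: map_f; rewrite mem_enum.
rewrite big_tnth in sum0.
have s_inj : injective (tnth (in_tuple s)).
  move=> u v; rewrite !(tnth_nth j) => /eqP.
  by rewrite nth_uniq ?undup_uniq // => /eqP /val_inj.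
by have [t ->] := seq_tnthP js; apply: e_free s_inj sum0 t.
Qed.

Lemma W_cl_disjoint Q x : W_cl e Q x -> W_cl e (fun j => ~ Q j) x -> x = 0.
Proof.
move=> /W_clP [k1 [c1 [a1 [Qc1 ->]]]] /W_clP [k2 [c2 [a2 [Qc2 E]]]].
pose c t := match t with inl u => c1 u | inr u => c2 u end.
pose a t := match t with inl u => a1 u | inr u => - a2 u end.
have /sum_scale_eq0 coef0 : \sum_(t : 'I_k1 + 'I_k2) a t *: e (c t) = 0.
  rewrite big_sumType /=; under [X in _ + X]eq_bigr do rewrite scaleNr.
  by rewrite sumrN E subrr.
rewrite sum_scale_group big1_seq // => j _.
have [Qj|nQj] := pselect (Q j); last first.
  by rewrite big1 ?scale0r // => t /eqP ctj; case: nQj; rewrite -ctj.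
have := coef0 j; rewrite big_sumType /= [X in _ + X]big1 ?addr0 => [->|t /eqP ctj].
  by rewrite scale0r.
by case: (Qc2 t); rewrite ctj.
Qed.

End BasisSpan.

Lemma ins_same (T : Type) p (k : 'I_p.+1) (a : T) z : ins k a z k = a.
Proof. by rewrite /ins unlift_none. Qed.

Lemma ins_lift (T : Type) p (k : 'I_p.+1) (a : T) z r : ins k a z (lift k r) = z r.
Proof. by rewrite /ins liftK. Qed.

Definition swap01 {m : nat} : 'S_m.+2 := tperm ord0 (lift ord0 ord0).

Lemma ins0_swap01 (T : Type) m (a b : T) (z : 'I_m -> T) :
  ins ord0 a (ins ord0 b z) = (fun r => ins ord0 b (ins ord0 a z) (swap01 r)).
Proof.
apply/funext => r; case: (unliftP ord0 r) => [r1|] ->; last by rewrite tpermL ins_lift !ins_same.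
case: (unliftP ord0 r1) => [r2|] ->; last by rewrite tpermR ins_same !ins_lift ins_same.
by rewrite tpermD ?ins_lift.
Qed.

Section Connectivity.
Variables (F : fieldType) (L : lmodType F) (m : nat) (I : Type).
Variables (prod : ('I_m.+2 -> L) -> L) (e : I -> L).
Local Notation V0 := (zero_sp L).

Lemma J_cl_zero : J_cl V0 prod e = W_cl e.
Proof.
apply/funext => C; apply/funext => x; apply/propext; split.
  by move=> [_ [y [[_ ->] [Wy ->]]]]; rewrite add0r.
by move=> Wx; exists 0, x; rewrite add0r; split=> //; split=> //; exact: (subspace_span _).1.
Qed.

Lemma prodset_perm (A : 'I_m.+2 -> L -> Prop) (sigma tau : 'S_m.+2) :
  prodset prod (sigma * tau^-1)%g (fun r => A (tau r)) = prodset prod sigma A.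
Proof.
apply: eq_span => z; split=> -[x [Ax ->]].
  exists (fun r => x ((tau^-1)%g r)); split=> [r|].
    by have := Ax ((tau^-1)%g r); rewrite permKV.
  by congr prod; apply/funext => r; rewrite permM.
exists (fun r => x (tau r)); split=> //.
by congr prod; apply/funext => r; rewrite permM permKV.
Qed.

Lemma a_sig_perm (js : 'I_m.+2 -> option I) (sigma tau : 'S_m.+2) o :
  a_sig V0 prod e (sigma * tau^-1)%g (fun r => js (tau r)) o <-> a_sig V0 prod e sigma js o.
Proof. by rewrite /a_sig (prodset_perm (fun r => u_ V0 e (js r))). Qed.

Hypothesis e_free : free_family e.

Lemma a_sig_v sigma js : ~ a_sig V0 prod e sigma js None.
Proof. by move=> [[z [Pz z0]] PV]; apply/z0/PV. Qed.

Lemma a_sig_functional sigma js j o :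
  a_sig V0 prod e sigma js (Some j) -> a_sig V0 prod e sigma js o -> o = Some j.
Proof.
case: o => [j'|]; last by move=> _ /a_sig_v.
move=> [[z [Pz z0]] Pj] [_ Pj']; have [->//|neq] := pselect (j' = j).
have [a za] := Pj z Pz; have [a' za'] := Pj' z Pz.
case: z0; apply: (W_cl_disjoint e_free (Q := fun i => i = j)).
  by rewrite za; exact: W_cl_scale.
by rewrite za'; exact: W_cl_scale.
Qed.

Definition step (i j : I) := exists b X, mu V0 prod e (b, Some i) X (Some j).

(* b_sigma inverts a_sigma, and swapping the first two arguments of a product inverts
   the barred-first-argument case of mu. *)
Lemma step_sym i j : step i j -> step j i.
Proof.
move=> [b [[xb tl]]]; case: b; case: xb => //=.
- move=> [k [sigma H]]; exists true, (false, tl), k, (sigma * swap01^-1)%g => o.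
  by rewrite -H /= (ins0_swap01 (Some i)) a_sig_perm.
- by move=> [sigma H]; exists false, (false, tl), sigma; apply/H.
- move=> [sigma H]; exists false, (true, tl), sigma => o.
  by split=> [/(a_sig_functional H)|->].
Qed.

Local Notation reach := (clos_refl_trans I step).

Lemma reach_sym i j : reach i j -> reach j i.
Proof.
elim=> [x y /step_sym|x|x y z _ IHxy _ IHyz]; first exact: rt_step.
  exact: rt_refl.
exact: rt_trans IHyz IHxy.
Qed.

Local Notation phiV := (phi V0 prod e).

Lemma foldl_phi_reach b i Xs p : foldl phiV (fun z => z = (b, i)) Xs p -> reach i p.2.
Proof.
elim/last_ind: Xs p => [|Xs X IH] p /=; first by move=> ->; exact: rt_refl.
rewrite foldl_rcons => -[q [/IH iq qp]].
by apply: rt_trans iq (rt_step _ _ _ _ _); exists q.1, X.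
Qed.

Lemma foldl_phi_nonempty J Xs : (exists z, foldl phiV J Xs z) -> exists z, J z.
Proof. by elim: Xs J => [|X Xs IH] J //= /IH [_ [z [Jz _]]]; exists z. Qed.

(* phi ignores the bar flag of the index it reaches, hence [forall f]. *)
Lemma reach_foldl_phi i j : reach i j -> i = j \/ exists Xs b,
  (0 < size Xs)%N /\ forall f, foldl phiV (fun z => z = (b, i)) Xs (f, j).
Proof.
move=> ij; elim: (clos_rt_rtn1 _ _ _ _ ij) => [|y z [b [X yz]] _ IH]; first by left.
right; case: IH => [->|[Xs [b' [_ H]]]].
  by exists [:: X], b; split=> // f /=; exists (b, y).
exists (rcons Xs X), b'; rewrite size_rcons; split=> // f.
by rewrite foldl_rcons; exists (b, y).
Qed.

Lemma connected_reach i j : connected V0 prod e i j <-> reach i j.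
Proof.
split=> [[->|[_ [Xs [b [_ [_ /foldl_phi_reach]]]]]] //|]; first exact: rt_refl.
move=> /reach_foldl_phi [->|[Xs [b [Xs_gt0 H]]]]; first by left.
have [->|neq] := pselect (i = j); first by left.
right; split=> //; exists Xs, b; split=> //; split=> // k _.
apply: (@foldl_phi_nonempty _ (drop k Xs)); exists (false, j).
by rewrite -foldl_cat cat_take_drop.
Qed.

Lemma cls_refl i : cls V0 prod e i i.
Proof. by left. Qed.

Lemma cls_eq i1 i2 j :
  cls V0 prod e i1 j -> cls V0 prod e i2 j -> cls V0 prod e i1 = cls V0 prod e i2.
Proof.
move=> /connected_reach i1j /connected_reach i2j.
have i12 := rt_trans _ _ _ _ _ i1j (reach_sym i2j).
apply/funext => x; apply/propext; rewrite /cls !connected_reach.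
by split=> H; [apply: rt_trans (reach_sym i12) H | apply: rt_trans i12 H].
Qed.

Lemma conn_classes_eq (C1 C2 : conn_classes V0 prod e) j :
  sval C1 j -> sval C2 j -> C1 = C2.
Proof.
case: C1 C2 => [C1 [i1 C1i1]] [C2 [i2 C2i2]] /= C1j C2j; apply: eq_exist.
by rewrite C1i1 C2i2 in C1j C2j *; exact: cls_eq C1j C2j.
Qed.

Lemma step_of_prod (idx : 'I_m.+2 -> I) a j p :
  prod (fun r => e (idx r)) = a *: e j -> a != 0 -> step (idx p) j.
Proof.
move=> idx_j a0; pose tau : 'S_m.+2 := tperm ord0 p.
pose tl s := Some (idx (tau (lift ord0 s))).
exists false, (false, tl), tau => /=.
have js r : ins ord0 (Some (idx p)) tl r = Some (idx (tau r)).
  by case: (unliftP ord0 r) => [r'|] ->; rewrite ?ins_lift // ins_same tpermL.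
pose w := prod (fun r => e (idx r)).
have span_w : prodset prod tau (fun r => u_ V0 e (ins ord0 (Some (idx p)) tl r)) =
          Defs.span (fun z => z = w).
  apply: eq_span => z; split=> [[x [Hx ->]]|->].
    by rewrite /w; congr prod; apply/funext => r; have := Hx (tau r); rewrite js tpermK.
  exists (fun r => e (idx (tau r))); split=> [r|]; first by rewrite js.
  by rewrite /w; congr prod; apply/funext => r; rewrite tpermK.
rewrite /a_sig span_w; split.
  exists w; split; first exact: span_mem.
  by apply/eqP; rewrite /w idx_j scaler_eq0 negb_or a0 e_neq0.
apply: span_sub_subspace; last by move=> _ ->; exists a.
split=> [|b _ _ [c1 ->] [c2 ->]]; first by exists 0; rewrite scale0r.
by exists (b * c1 + c2); rewrite scalerDl scalerA.
Qed.

Lemma cls_prod i (idx : 'I_m.+2 -> I) a j p :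
  prod (fun r => e (idx r)) = a *: e j -> a != 0 ->
  cls V0 prod e i (idx p) -> cls V0 prod e i j.
Proof.
move=> idx_j a0 /connected_reach i_idx; apply/connected_reach.
exact: rt_trans i_idx (rt_step _ _ _ _ (step_of_prod p idx_j a0)).
Qed.

End Connectivity.

Section ClassDecomposition.
Variables (F : fieldType) (L : lmodType F) (m : nat) (I : Type).
Variables (prod : ('I_m.+2 -> L) -> L) (e : I -> L).
Hypothesis prod_multilinear : multilinear prod.
Hypothesis e_free : free_family e.
Hypothesis e_span : forall x, W_cl e (fun _ => True) x.
Hypothesis e_mul :
  forall idx : 'I_m.+2 -> I, exists j (a : F), prod (fun r => e (idx r)) = a *: e j.
Local Notation V0 := (zero_sp L).
Local Notation cls := (cls V0 prod e).

Lemma direct_sum_W_cl_classes : direct_sum (fun C : conn_classes V0 prod e => W_cl e (sval C)).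
Proof.
split; first by move=> C; exact: W_cl_subspace.
split=> [x|k C y C_inj Cy sum0 t0].
  have /W_clP [k [c [a [_ ->]]]] := e_span x.
  exists k, (fun t => exist _ (cls (c t)) (ex_intro _ (c t) erefl)), (fun t => a t *: e (c t)).
  by split=> // t; apply: W_cl_scale; apply: cls_refl.
have others : W_cl e (fun j => ~ sval (C t0) j) (\sum_(t | t != t0) y t).
  apply: subspace_sum => [|t tt0]; first exact: W_cl_subspace.
  apply: W_cl_sub (Cy t) => j Ctj Ct0j; move/negP: tt0; apply.
  by apply/eqP/C_inj; apply: conn_classes_eq Ctj Ct0j.
apply: (W_cl_disjoint e_free (Cy t0)).
move: sum0; rewrite (bigD1 t0) //= => /eqP; rewrite addr_eq0 => /eqP ->.
exact: subspaceN (W_cl_subspace _ _) others.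
Qed.

Lemma prod_zero (x : 'I_m.+2 -> L) k : prod (fun r => if r == k then 0 else x r) = 0.
Proof.
have := prod_multilinear x k 1 0 0; rewrite scaler0 add0r scale1r => /esym/eqP.
by rewrite -subr_eq0 addrK => /eqP.
Qed.

Lemma prod_span_at (S P : L -> Prop) (x : 'I_m.+2 -> L) k : subspace P ->
  (forall y, S y -> P (prod (fun r => if r == k then y else x r))) ->
  forall y, Defs.span S y -> P (prod (fun r => if r == k then y else x r)).
Proof.
move=> sP PS; apply: span_sub_subspace => //; split=> [|a y z Py Pz].
  by rewrite prod_zero; exact: sP.1.
by rewrite prod_multilinear; apply: sP.2.
Qed.

Lemma prod_span (B : 'I_m.+2 -> L -> Prop) (P : L -> Prop) : subspace P ->
  (forall x, (forall r, B r (x r)) -> P (prod x)) ->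
  forall x, (forall r, Defs.span (B r) (x r)) -> P (prod x).
Proof.
move=> sP PB.
suff PBn n x : (forall r : 'I_m.+2, (r < n)%N -> Defs.span (B r) (x r)) ->
    (forall r : 'I_m.+2, (n <= r)%N -> B r (x r)) -> P (prod x).
  by move=> x Bx; apply: (PBn m.+2) => // r; rewrite leqNgt ltn_ord.
elim: n x => [|n IH] x xlt xge; first by apply: PB => r; apply: xge.
have [n_lt|n_ge] := ltnP n m.+2; last first.
  apply: IH => [r r_lt|r r_ge]; first by apply: xlt; rewrite ltnS ltnW.
  by have := ltn_ord r; rewrite ltnNge (leq_trans n_ge r_ge).
pose k := Ordinal n_lt.
have -> : x = fun r => if r == k then x k else x r by apply/funext => r; case: eqP => // ->.
apply: prod_span_at => [|y By|]; [exact: sP | | exact: xlt].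
apply: IH => r r_n; case: eqP => [rk|rk].
- by move: r_n; rewrite rk ltnn.
- by apply: xlt; apply: ltnW.
- by rewrite rk.
- apply: xge; rewrite ltn_neqAle r_n andbT; apply/eqP => nr.
  by apply: rk; apply: val_inj; rewrite /= -nr.
Qed.

Lemma W_cl_cls_ideal i (sigma : 'S_m.+2) z :
  prodset prod sigma (fun r => if r == ord0 then W_cl e (cls i) else fun _ => True) z ->
  W_cl e (cls i) z.
Proof.
apply: span_sub_subspace; first exact: W_cl_subspace.
move=> _ [x [Hx ->]].
pose B r y := exists j, (sigma r == ord0 -> cls i j) /\ y = e j.
apply: (@prod_span B) => [|x' Bx'|r]; first exact: W_cl_subspace.
  have [idx Hidx] := choice Bx'.
  have -> : x' = fun r => e (idx r) by apply/funext => r; case: (Hidx r).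
  have [j [a idx_j]] := e_mul idx.
  rewrite idx_j; have [->|a0] := eqVneq a 0.
    by rewrite scale0r; exact: (W_cl_subspace _ _).1.
  apply: W_cl_scale; apply: (cls_prod e_free idx_j a0 (p := (sigma^-1)%g ord0)).
  by apply: (Hidx _).1; rewrite permKV.
have span_B Q : (forall j, Q j -> sigma r == ord0 -> cls i j) ->
    forall y, W_cl e Q y -> Defs.span (B r) y.
  move=> QB; apply: span_sub_subspace; first exact: subspace_span.
  by move=> _ [j [Qj ->]]; apply: span_mem; exists j; split=> //; apply: QB.
have := Hx (sigma r); case: eqP => [_|s0] xr; first exact: span_B xr.
by apply: (span_B _ _ _ (e_span _)) => j _ /eqP.
Qed.

Lemma mult_basis_W_cl_cls (G : zmodType) (Lg : G -> L -> Prop) i :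
  (forall j, exists g, Lg g (e j)) -> mult_basis Lg prod (W_cl e (cls i)) (cls i) e.
Proof.
move=> e_hom; split=> [j _|]; first exact: e_hom.
split=> [k c a c_inj _|]; first exact: e_free.
split=> [x|idx idx_i]; first exact: W_clP.
have [j [a idx_j]] := e_mul idx.
have [a0|a_neq0] := eqVneq a 0.
  by exists i; split; [exact: cls_refl | exists 0; rewrite idx_j a0 !scale0r].
by exists j; split; [exact: cls_prod idx_j a_neq0 (idx_i ord0) | exists a].
Qed.

End ClassDecomposition.

Theorem corollary3p13 (F : fieldType) (G : zmodType) (m : nat) (L : lmodType F)
  (eps : G -> G -> F) (Lg : G -> L -> Prop) (prod : ('I_m.+2 -> L) -> L)
  (I : Type) (e : I -> L) :
  bicharacter eps ->
  color_gLt_algebra eps Lg prod ->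
  mult_basis Lg prod (fun _ => True) (fun _ => True) e ->
  direct_sum (fun C : conn_classes (zero_sp L) prod e => J_cl (zero_sp L) prod e (proj1_sig C)) /\
  (forall i : I,
     color_ideal Lg prod (J_cl (zero_sp L) prod e (cls (zero_sp L) prod e i)) /\
     mult_basis Lg prod (J_cl (zero_sp L) prod e (cls (zero_sp L) prod e i))
                (cls (zero_sp L) prod e i) e).
Proof.
move=> _ [[prod_ml [[Lg_sub _] _]] _] [e_hom [e_free [e_span e_mul]]].
have free_e : free_family e by move=> k c a c_inj; exact: e_free.
have span_e x : W_cl e (fun _ => True) x by apply/W_clP; apply: (e_span x).1.
have mul_e idx : exists j a, prod (fun r => e (idx r)) = a *: e j.
  by have [j [_ idx_j]] := e_mul idx (fun _ => Logic.I); exists j.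
have hom_e j : exists g, Lg g (e j) by exact: e_hom.
rewrite J_cl_zero; split; first exact: (direct_sum_W_cl_classes prod free_e span_e).
move=> i; split; last exact: (mult_basis_W_cl_cls free_e mul_e i hom_e).
split; first exact: (graded_subspace_W_cl _ Lg_sub hom_e).
exact: (W_cl_cls_ideal prod_ml free_e span_e mul_e).
Qed.
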